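(* Let $p,q$ be odd primes with $q-p=2$, let $\varepsilon\in\{1,-1\}$, let $D=D_1\cdots D_n$ ($n\ge 0$) be a product of distinct odd primes with $\gcd(pq,D)=1$, and let $E_D/\mathbb{Q}$ be the elliptic curve $y^2=x(x+\varepsilon pD)(x+\varepsilon qD)$. Then: (1) $E_D$ has good supersingular reduction at $3$ if $3\nmid pqD$; (2) $E_D$ has good ordinary reduction at $5$ if $5\nmid pqD$; (3) $E_D$ has good ordinary reduction at $7$ if $7\nmid pqD$ and $p\equiv 1,4\pmod 7$; (4) $E_D$ has good supersingular reduction at $7$ if $7\nmid pqD$ and $p\equiv 2,3,6\pmod 7$. *)

From HB Require Import structures.
From mathcomp Require Import all_boot all_order all_algebra.
Set Implicit Arguments. Unset Strict Implicit. Unset Printing Implicit Defensive.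
Import Order.TTheory GRing.Theory Num.Theory.
Local Open Scope ring_scope.

Record wmodel := WModel { wa1 : int; wa2 : int; wa3 : int; wa4 : int; wa6 : int }.

(* Discriminant (Silverman III.1). *)
Definition wdisc (E : wmodel) : int :=
  let a1 := wa1 E in let a2 := wa2 E in let a3 := wa3 E in
  let a4 := wa4 E in let a6 := wa6 E in
  let b2 := a1 ^+ 2 + 4 * a2 in
  let b4 := 2 * a4 + a1 * a3 in
  let b6 := a3 ^+ 2 + 4 * a6 in
  let b8 := a1 ^+ 2 * a6 + 4 * a2 * a6 - a1 * a3 * a4 + a2 * a3 ^+ 2 - a4 ^+ 2 in
  - b2 ^+ 2 * b8 - 8 * b4 ^+ 3 - 27 * b6 ^+ 2 + 9 * b2 * b4 * b6.

(* E' is obtained from E by an admissible change of variables over Q: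
   x = u^2 x' + r, y = u^3 y' + s u^2 x' + t, u <> 0 (Silverman Table 3.1). *)
Definition wiso (E E' : wmodel) : Prop :=
  let a1 : rat := (wa1 E)%:~R in let a2 : rat := (wa2 E)%:~R in
  let a3 : rat := (wa3 E)%:~R in let a4 : rat := (wa4 E)%:~R in
  let a6 : rat := (wa6 E)%:~R in
  let a1' : rat := (wa1 E')%:~R in let a2' : rat := (wa2 E')%:~R in
  let a3' : rat := (wa3 E')%:~R in let a4' : rat := (wa4 E')%:~R in
  let a6' : rat := (wa6 E')%:~R in
  exists u r s t : rat, u != 0 /\
    u * a1' = a1 + 2 * s /\
    u ^+ 2 * a2' = a2 - s * a1 + 3 * r - s ^+ 2 /\
    u ^+ 3 * a3' = a3 + r * a1 + 2 * t /\
    u ^+ 4 * a4' = a4 - s * a3 + 2 * r * a2 - (t + r * s) * a1 + 3 * r ^+ 2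
                   - 2 * s * t /\
    u ^+ 6 * a6' = a6 + r * a4 + r ^+ 2 * a2 + r ^+ 3 - t * a3 - t ^+ 2
                   - r * t * a1.

Definition good_model_at (l : nat) (E : wmodel) : Prop :=
  ~~ (l%:Z %| wdisc E)%Z.

Definition weq (E : wmodel) (x y : int) : int :=
  y ^+ 2 + wa1 E * x * y + wa3 E * y
  - (x ^+ 3 + wa2 E * x ^+ 2 + wa4 E * x + wa6 E).

(* Number of F_l-points of the reduction of E mod l (affine points plus the
   point at infinity). *)
Definition npoints (l : nat) (E : wmodel) : nat :=
  #|[set P : 'I_l * 'I_l | (l%:Z %| weq E (P.1 : nat)%:Z (P.2 : nat)%:Z)%Z]|.+1.

Definition trace_frob (l : nat) (E : wmodel) : int :=
  l%:Z + 1 - (npoints l E)%:Z.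

(* E/Q has good reduction at l, and the reduced curve is supersingular
   (resp. ordinary), i.e. l | a_l (resp. l does not divide a_l), computed on a
   Q-isomorphic integral model with l-unit discriminant. *)
Definition good_supersingular_at (l : nat) (E : wmodel) : Prop :=
  exists E', wiso E E' /\ good_model_at l E' /\ (l%:Z %| trace_frob l E')%Z.

Definition good_ordinary_at (l : nat) (E : wmodel) : Prop :=
  exists E', wiso E E' /\ good_model_at l E' /\ ~~ (l%:Z %| trace_frob l E')%Z.

(* E_D : y^2 = x (x + eps p D)(x + eps q D), expanded. *)
Definition E_D (eps : int) (p q D : nat) : wmodel :=
  WModel 0 (eps * (p%:Z + q%:Z) * D%:Z) 0
         (eps ^+ 2 * p%:Z * q%:Z * D%:Z ^+ 2) 0.

From HB Require Import structures.
From mathcomp Require Import all_boot all_order all_algebra.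
Set Implicit Arguments. Unset Strict Implicit. Unset Printing Implicit Defensive.
Import Order.TTheory GRing.Theory Num.Theory.
Local Open Scope ring_scope.

(* The discriminant and the Weierstrass polynomial of E_D are integer
   polynomials in its coefficients, so whether l divides them (hence the good
   reduction of the model E_D itself and its number of points mod l) depends
   only on eps and the residues of p and D mod l. For l = 3, 5, 7 these
   finitely many cases are decided by computation, using that l divides the
   trace of Frobenius exactly when it divides the number of affine points. *)

Section CongruenceModz.
Variable d : int.

Lemma eqmodzD a b c e : (a = b %[mod d])%Z -> (c = e %[mod d])%Z ->
  (a + c = b + e %[mod d])%Z.
Proof. by move=> hab hce; rewrite -modzDm hab hce modzDm. Qed.

Lemma eqmodzN a b : (a = b %[mod d])%Z -> (- a = - b %[mod d])%Z.
Proof. by move=> hab; rewrite -modzNm hab modzNm. Qed.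

Lemma eqmodzM a b c e : (a = b %[mod d])%Z -> (c = e %[mod d])%Z ->
  (a * c = b * e %[mod d])%Z.
Proof. by move=> hab hce; rewrite -modzMm hab hce modzMm. Qed.

Lemma eqmodzX n a b : (a = b %[mod d])%Z -> (a ^+ n = b ^+ n %[mod d])%Z.
Proof. by move=> hab; rewrite -modzXm hab modzXm. Qed.

Lemma dvdz_eqmodz a b : (a = b %[mod d])%Z -> (d %| a)%Z = (d %| b)%Z.
Proof. by move=> hab; apply/dvdz_mod0P/dvdz_mod0P; rewrite hab. Qed.

End CongruenceModz.

Ltac eqmodz_congr :=
  repeat first [ reflexivity | assumption
               | apply: eqmodzD | apply: eqmodzN | apply: eqmodzM | apply: eqmodzX ].

Definition wmodel_eqmodz (l : nat) (E E' : wmodel) : Prop :=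
  [/\ wa1 E = wa1 E' %[mod l], wa2 E = wa2 E' %[mod l], wa3 E = wa3 E' %[mod l],
      wa4 E = wa4 E' %[mod l] & wa6 E = wa6 E' %[mod l]]%Z.

Section CongruentModels.
Variables (l : nat) (E E' : wmodel).
Hypothesis EE' : wmodel_eqmodz l E E'.

Lemma wdisc_eqmodz : (wdisc E = wdisc E' %[mod l])%Z.
Proof. by case: EE' => *; rewrite /wdisc; eqmodz_congr. Qed.

Lemma weq_eqmodz x y : (weq E x y = weq E' x y %[mod l])%Z.
Proof. by case: EE' => *; rewrite /weq; eqmodz_congr. Qed.

Lemma good_model_at_eqmodz : good_model_at l E <-> good_model_at l E'.
Proof. by rewrite /good_model_at (dvdz_eqmodz wdisc_eqmodz). Qed.

Lemma npoints_eqmodz : npoints l E = npoints l E'.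
Proof.
rewrite /npoints; congr _.+1; apply: eq_card => P.
by rewrite !inE (dvdz_eqmodz (weq_eqmodz _ _)).
Qed.

Lemma trace_frob_eqmodz : trace_frob l E = trace_frob l E'.
Proof. by rewrite /trace_frob npoints_eqmodz. Qed.

End CongruentModels.

Definition affine_count (l : nat) (E : wmodel) : nat :=
  \sum_(0 <= i < l) \sum_(0 <= j < l) (l%:Z %| weq E i%:Z j%:Z)%Z.

Lemma npoints_affine_count l E : npoints l E = (affine_count l E).+1.
Proof.
rewrite /npoints /affine_count cardsE -sum1_card big_mkcond /= big_mkord.
rewrite -(pair_bigA _ (fun i j : 'I_l =>
  if (l%:Z %| weq E (i : nat)%:Z (j : nat)%:Z)%Z then 1 else 0))%N.
congr _.+1; apply: eq_bigr => i _; rewrite big_mkord.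
by apply: eq_bigr => j _; case: ifP.
Qed.

Lemma dvdz_trace_frob l E :
  (l%:Z %| trace_frob l E)%Z = (l %| affine_count l E)%N.
Proof.
rewrite /trace_frob npoints_affine_count intS opprD addrA addrK.
by rewrite rpredBl ?dvdzz.
Qed.

Lemma eqmodz_nat_mod (l n : nat) : (n%:Z = (n %% l)%N%:Z %[mod l])%Z.
Proof. by rewrite !modz_nat modn_mod. Qed.

Definition wmodel_modz (l : nat) (E : wmodel) : wmodel :=
  WModel (wa1 E %% l)%Z (wa2 E %% l)%Z (wa3 E %% l)%Z (wa4 E %% l)%Z (wa6 E %% l)%Z.

Lemma E_D_eqmodz l eps p D :
  wmodel_eqmodz l (E_D eps p (p + 2) D)
    (wmodel_modz l (E_D eps (p %% l) (p %% l + 2) (D %% l))).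
Proof.
have hp := eqmodz_nat_mod l p; have hD := eqmodz_nat_mod l D.
by split; rewrite /= modz_mod ?PoszD; eqmodz_congr.
Qed.

Lemma dvdn_E_D_mod (l p D : nat) :
  (l %| p * (p + 2) * D)%N = (l %| (p %% l) * (p %% l + 2) * (D %% l))%N.
Proof.
have hp := eqmodz_nat_mod l p; have hD := eqmodz_nat_mod l D.
apply: (dvdz_eqmodz (d := l) (a := (p * (p + 2) * D)%N%:Z)
                        (b := ((p %% l) * (p %% l + 2) * (D %% l))%N%:Z)).
by rewrite !PoszM !PoszD; eqmodz_congr.
Qed.

(* The coefficients are reduced mod l before evaluating: [int] is unary, so the
   discriminant of the unreduced residue model would be far too large. *)
Definition E_D_residue_check (l : nat) (c : pred nat) (ss : bool) : bool :=
  all (fun pr => all (fun dr => all (fun eps : int =>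
    let E := wmodel_modz l (E_D eps pr (pr + 2) dr) in
    [&& c pr & ~~ (l %| pr * (pr + 2) * dr)%N] ==>
    ~~ (l%:Z %| wdisc E)%Z && ((l %| affine_count l E)%N == ss))
    [:: 1; -1]) (iota 0 l)) (iota 0 l).

Lemma E_D_residue_check3 : E_D_residue_check 3 predT true.
Proof. by rewrite /E_D_residue_check /affine_count unlock; vm_compute. Qed.

Lemma E_D_residue_check5 : E_D_residue_check 5 predT false.
Proof. by rewrite /E_D_residue_check /affine_count unlock; vm_compute. Qed.

Lemma E_D_residue_check7_ordinary :
  E_D_residue_check 7 (fun pr => (pr == 1) || (pr == 4))%N false.
Proof. by rewrite /E_D_residue_check /affine_count unlock; vm_compute. Qed.

Lemma E_D_residue_check7_supersingular :
  E_D_residue_check 7 (fun pr => [|| pr == 2, pr == 3 | pr == 6])%N true.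
Proof. by rewrite /E_D_residue_check /affine_count unlock; vm_compute. Qed.

Lemma E_D_reduction_type l c ss eps p D :
  E_D_residue_check l c ss -> (0 < l)%N -> eps \in [:: 1; -1] ->
  c (p %% l)%N -> ~~ (l %| p * (p + 2) * D)%N ->
  good_model_at l (E_D eps p (p + 2) D) /\
  (l%:Z %| trace_frob l (E_D eps p (p + 2) D))%Z = ss.
Proof.
move=> check l_gt0 heps cp lNpD.
move/allP/(_ (p %% l)%N): check; rewrite mem_iota ltn_pmod // => /(_ isT).
move/allP/(_ (D %% l)%N); rewrite mem_iota ltn_pmod // => /(_ isT).
move/allP/(_ eps heps); rewrite cp -dvdn_E_D_mod lNpD /= => /andP[good ss_eq].
have EE := E_D_eqmodz l eps p D.
split; first exact/(good_model_at_eqmodz EE).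
by rewrite (trace_frob_eqmodz EE) dvdz_trace_frob (eqP ss_eq).
Qed.

Lemma wiso_refl E : wiso E E.
Proof.
exists 1, 0, 0, 0; split; first by rewrite oner_eq0.
by rewrite !(expr1n, mul1r, mul0r, mulr0, addr0, subr0, expr0n, oppr0, add0r).
Qed.

Lemma good_supersingular_at_model l E :
  good_model_at l E -> (l%:Z %| trace_frob l E)%Z -> good_supersingular_at l E.
Proof. by exists E; split; first exact: wiso_refl. Qed.

Lemma good_ordinary_at_model l E :
  good_model_at l E -> ~~ (l%:Z %| trace_frob l E)%Z -> good_ordinary_at l E.
Proof. by exists E; split; first exact: wiso_refl. Qed.

Theorem corollary2p2 (p q : nat) (eps : int) (Ds : seq nat) :
  prime p -> odd p -> prime q -> odd q -> (q = p + 2)%N ->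
  (eps = 1 \/ eps = -1) ->
  uniq Ds -> all (fun d => prime d && odd d) Ds ->
  coprime (p * q) (\prod_(d <- Ds) d) ->
  let D := (\prod_(d <- Ds) d)%N in
  let E := E_D eps p q D in
  [/\ (~~ (3 %| p * q * D)%N -> good_supersingular_at 3 E),
      (~~ (5 %| p * q * D)%N -> good_ordinary_at 5 E),
      (~~ (7 %| p * q * D)%N -> ((p %% 7 == 1) || (p %% 7 == 4))%N ->
         good_ordinary_at 7 E) &
      (~~ (7 %| p * q * D)%N -> [|| p %% 7 == 2, p %% 7 == 3 | p %% 7 == 6]%N ->
         good_supersingular_at 7 E)].
Proof.
move=> _ _ _ _ -> eps_pm _ _ _ D E; rewrite {}/E.
have eps_unit : eps \in [:: 1; -1] by case: eps_pm => ->.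
split=> [lNpqD | lNpqD | lNpqD p_mod7 | lNpqD p_mod7].
- have [good ss] := E_D_reduction_type E_D_residue_check3 isT eps_unit isT lNpqD.
  by apply: good_supersingular_at_model; rewrite ?ss.
- have [good ss] := E_D_reduction_type E_D_residue_check5 isT eps_unit isT lNpqD.
  by apply: good_ordinary_at_model; rewrite ?ss.
- have [good ss] :=
    E_D_reduction_type E_D_residue_check7_ordinary isT eps_unit p_mod7 lNpqD.
  by apply: good_ordinary_at_model; rewrite ?ss.
- have [good ss] :=
    E_D_reduction_type E_D_residue_check7_supersingular isT eps_unit p_mod7 lNpqD.
  by apply: good_supersingular_at_model; rewrite ?ss.
Qed.
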